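(* Let $V$ be a set of $N\geq3$ truth values with a partial order $\leq$ having $0$ as least and $1$ as greatest element, let $\models_{\leq}$ be the associated order-theoretic truth-relation, and assume the semantics is at least atomic expressive. Then $\models_{\leq}$ admits no G-negation and no G-conditional. Moreover, it admits a G-conjunction and a G-disjunction if and only if it is total, i.e. any two truth values other than $0,1$ are comparable under $\leq$.
   Context: $\gamma\models_{\leq}\delta$ iff ($\exists x\in\gamma,\exists y\in\delta: x\leq y$) or $0\in\gamma$ or $1\in\delta$. Semantics: valuations mapping atoms to $V$, connectives interpreted by fixed truth functions, extended compositionally, every assignment of values to finitely many distinct atoms realized. Atomic expressive: for every $\gamma\subseteq V$ some set of formulas $\Gamma$ and valuation $v$ have $v(\Gamma)=\gamma$. $\Gamma\vdash\Delta$ iff $v(\Gamma)\models_{\leq}v(\Delta)$ for all $v$; $\Gamma,A=\Gamma\cup\{A\}$. Admitting a G-connective means some truth function makes a connective satisfy, for all $\Gamma,\Delta,A,B$: G-conjunction: $\Gamma,A\wedge B\vdash\Delta$ iff $\Gamma,A,B\vdash\Delta$; $\Gamma\vdash A\wedge B,\Delta$ iff ($\Gamma\vdash A,\Delta$ and $\Gamma\vdash B,\Delta$). G-disjunction: $\Gamma\vdash A\vee B,\Delta$ iff $\Gamma\vdash A,B,\Delta$; $\Gamma,A\vee B\vdash\Delta$ iff ($\Gamma,A\vdash\Delta$ and $\Gamma,B\vdash\Delta$). G-negation: $\Gamma,\neg A\vdash\Delta$ iff $\Gamma\vdash A,\Delta$; $\Gamma\vdash\neg A,\Delta$ iff $\Gamma,A\vdash\Delta$.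 G-conditional: $\Gamma\vdash A\to B,\Delta$ iff $\Gamma,A\vdash B,\Delta$; $\Gamma,A\to B\vdash\Delta$ iff ($\Gamma\vdash A,\Delta$ and $\Gamma,B\vdash\Delta$). *)

From mathcomp Require Import all_boot.
Set Implicit Arguments.
Unset Strict Implicit.
Unset Printing Implicit Defensive.

Definition order_with_bounds (V : Type) (le : V -> V -> Prop) (v0 v1 : V) : Prop :=
  (forall x, le x x) /\
  (forall x y, le x y -> le y x -> x = y) /\
  (forall x y z, le x y -> le y z -> le x z) /\
  (forall x, le v0 x) /\
  (forall x, le x v1).

Definition models_le (V : Type) (le : V -> V -> Prop) (v0 v1 : V)
  (gamma delta : V -> Prop) : Prop :=
  (exists x y, gamma x /\ delta y /\ le x y) \/ gamma v0 \/ delta v1.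

Definition total_le (V : Type) (le : V -> V -> Prop) (v0 v1 : V) : Prop :=
  forall x y, x <> v0 -> x <> v1 -> y <> v0 -> y <> v1 -> le x y \/ le y x.

Inductive form (C : Type) (ar : C -> nat) : Type :=
| Atom : nat -> form ar
| Op : forall c : C, ('I_(ar c) -> form ar) -> form ar.

Fixpoint eval (V C : Type) (ar : C -> nat)
  (I : forall c : C, ('I_(ar c) -> V) -> V) (v : nat -> V) (A : form ar) : V :=
  match A with
  | Atom n => v n
  | Op c ts => I c (fun i => eval I v (ts i))
  end.

(* A semantics: connectives with fixed truth functions, and a class of  *)
(* admissible valuations of the atoms.                                  *)
Record semantics (V : Type) := Semantics {
  conn : Type;
  arity : conn -> nat;
  interp : forall c : conn, ('I_(arity c) -> V) -> V;
  vals : (nat -> V) -> Prop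
}.

Definition sform (V : Type) (S : semantics V) := form (@arity V S).

Definition seval (V : Type) (S : semantics V) (v : nat -> V) (A : sform S) : V :=
  eval (@interp V S) v A.

Definition realizes_finite (V : Type) (S : semantics V) : Prop :=
  forall (f : nat -> V) (s : seq nat),
    exists v, vals S v /\ forall n, n \in s -> v n = f n.

Definition vimg (V : Type) (S : semantics V) (v : nat -> V) (G : sform S -> Prop)
  : V -> Prop := fun x => exists A, G A /\ seval v A = x.

Definition atomic_expressive (V : Type) (S : semantics V) : Prop :=
  forall gamma : V -> Prop,
    exists (G : sform S -> Prop) (v : nat -> V),
      vals S v /\ forall x, vimg v G x <-> gamma x.

Definition sequent (V : Type) (le : V -> V -> Prop) (v0 v1 : V) (S : semantics V)
  (G D : sform S -> Prop) : Prop :=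
  forall v, vals S v -> models_le le v0 v1 (vimg v G) (vimg v D).

Definition addf (T : Type) (G : T -> Prop) (A : T) : T -> Prop :=
  fun B => G B \/ B = A.

(* Extending a semantics by one new connective of arity k interpreted   *)
(* by the truth function f.  The new connective is [None].              *)
Definition ext_arity {V : Type} (S : semantics V) (k : nat) (o : option (conn S)) : nat :=
  match o with Some c => arity c | None => k end.

Definition ext_interp {V : Type} (S : semantics V) (k : nat) (f : ('I_k -> V) -> V)
  (o : option (conn S)) : ('I_(@ext_arity V S k o) -> V) -> V :=
  match o as o0 return ('I_(@ext_arity V S k o0) -> V) -> V with
  | Some c => @interp V S c
  | None => f
  end.

Definition extend {V : Type} (S : semantics V) (k : nat) (f : ('I_k -> V) -> V)
  : semantics V :=
  @Semantics V (option (conn S)) (@ext_arity V S k) (@ext_interp V S k f) (vals S).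

Definition new1 {V : Type} {S : semantics V} (f : ('I_1 -> V) -> V)
  (A : sform (extend S f)) : sform (extend S f) :=
  @Op _ (@arity V (extend S f)) (None : conn (extend S f)) (fun _ => A).

Definition new2 {V : Type} {S : semantics V} (f : ('I_2 -> V) -> V)
  (A B : sform (extend S f)) : sform (extend S f) :=
  @Op _ (@arity V (extend S f)) (None : conn (extend S f))
    (fun i : 'I_2 => if val i == 0 then A else B).

Definition admits_Gneg (V : Type) (le : V -> V -> Prop) (v0 v1 : V) (S : semantics V)
  : Prop :=
  exists f : ('I_1 -> V) -> V,
    forall (G D : sform (extend S f) -> Prop) (A : sform (extend S f)),
      (sequent le v0 v1 (addf G (new1 A)) D <-> sequent le v0 v1 G (addf D A)) /\
      (sequent le v0 v1 G (addf D (new1 A)) <-> sequent le v0 v1 (addf G A) D).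

Definition admits_Gconj (V : Type) (le : V -> V -> Prop) (v0 v1 : V) (S : semantics V)
  : Prop :=
  exists f : ('I_2 -> V) -> V,
    forall (G D : sform (extend S f) -> Prop) (A B : sform (extend S f)),
      (sequent le v0 v1 (addf G (new2 A B)) D <->
         sequent le v0 v1 (addf (addf G A) B) D) /\
      (sequent le v0 v1 G (addf D (new2 A B)) <->
         (sequent le v0 v1 G (addf D A) /\ sequent le v0 v1 G (addf D B))).

Definition admits_Gdisj (V : Type) (le : V -> V -> Prop) (v0 v1 : V) (S : semantics V)
  : Prop :=
  exists f : ('I_2 -> V) -> V,
    forall (G D : sform (extend S f) -> Prop) (A B : sform (extend S f)),
      (sequent le v0 v1 G (addf D (new2 A B)) <->
         sequent le v0 v1 G (addf (addf D A) B)) /\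
      (sequent le v0 v1 (addf G (new2 A B)) D <->
         (sequent le v0 v1 (addf G A) D /\ sequent le v0 v1 (addf G B) D)).

Definition admits_Gcond (V : Type) (le : V -> V -> Prop) (v0 v1 : V) (S : semantics V)
  : Prop :=
  exists f : ('I_2 -> V) -> V,
    forall (G D : sform (extend S f) -> Prop) (A B : sform (extend S f)),
      (sequent le v0 v1 G (addf D (new2 A B)) <->
         sequent le v0 v1 (addf G A) (addf D B)) /\
      (sequent le v0 v1 (addf G (new2 A B)) D <->
         (sequent le v0 v1 G (addf D A) /\ sequent le v0 v1 (addf G B) D)).

From Stdlib Require Import ClassicalEpsilon FunctionalExtensionality PropExtensionality.
From mathcomp Require Import all_boot.

(* Realizing a value m other than 0 and 1 at an atom p, the G-negation rules turn
   p |- p into p, ~p |- and |- p, ~p, which force ~p to take both the value 0 and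
   the value 1; the G-conditional rules do the same for p -> q with q valued 0, via
   p -> q, p |- q and |- p, p -> q.  The relation |=_<= splits over unions on either
   side and, on singletons, is antitone on the left and monotone on the right, so a
   truth function validates the G-conjunction (G-disjunction) rules as soon as it
   picks the smaller (larger) of its two arguments; this is possible when the order
   is total.  Conversely A v B |- A, B together with A |- A v B and B |- A v B place
   the value of A v B above both arguments and below one of them, so any two values
   are comparable. *)

Set Implicit Arguments.
Unset Strict Implicit.
Unset Printing Implicit Defensive.

Definition empty {T : Type} : T -> Prop := fun _ => False.

Section Bounds.
Variables (V : Type) (le : V -> V -> Prop) (v0 v1 : V).
Hypothesis Hord : order_with_bounds le v0 v1.

Lemma owb_refl x : le x x.
Proof. by case: Hord. Qed.

Lemma owb_anti {x y} : le x y -> le y x -> x = y.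
Proof. by case: Hord => _ [anti _]; apply: anti. Qed.

Lemma owb_trans {x y z} : le x y -> le y z -> le x z.
Proof. by case: Hord => _ [_ [trans _]]; apply: trans. Qed.

Lemma owb_ge0 x : le v0 x.
Proof. by case: Hord => _ [_ [_ []]]. Qed.

Lemma owb_le1 x : le x v1.
Proof. by case: Hord => _ [_ [_ []]]. Qed.

Lemma owb_le0 {x} : le x v0 -> x = v0.
Proof. by move/owb_anti; apply; apply: owb_ge0. Qed.

Lemma owb_collapse x : v0 = v1 -> x = v0.
Proof. by move=> v01; apply: owb_le0; rewrite v01; apply: owb_le1. Qed.

Lemma owb_flip : order_with_bounds (fun x y => le y x) v1 v0.
Proof.
split; first exact: owb_refl.
split; first by move=> x y ? ?; apply: owb_anti.
split; first by move=> x y z xy yz; apply: owb_trans yz xy.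
by split; [apply: owb_le1 | apply: owb_ge0].
Qed.

End Bounds.

Section Models.
Variables (V : Type) (le : V -> V -> Prop) (v0 v1 : V).
Local Notation models := (models_le le v0 v1).
Local Notation single x := (addf empty x).

Lemma models_emptyl d : models empty d <-> d v1.
Proof. by split=> [[[x [y [[]]]]|[[]|]]|]; [|right; right]. Qed.

Lemma models_emptyr g : models g empty <-> g v0.
Proof. by split=> [[[x [y [_ [[]]]]]|[|[]]]|]; [|right; left]. Qed.

Lemma models_addl g d c : models (addf g c) d <-> models g d \/ models (single c) d.
Proof.
split.
- case=> [[x [y [[gx|->] [dy xy]]]]|[[g0|->]|d1]].
  + by left; left; exists x, y.
  + by right; left; exists c, y; split; first right.
  + by left; right; left.
  + by right; right; left; right.
  + by left; right; right.
- case=> [[[x [y [gx [dy xy]]]]|[g0|d1]]|[[x [y [[[]|->] [dy xy]]]]|[[[]|->]|d1]]].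
  + by left; exists x, y; split; first left.
  + by right; left; left.
  + by right; right.
  + by left; exists c, y; split; first right.
  + by right; left; right.
  + by right; right.
Qed.

Lemma models_addr g d c : models g (addf d c) <-> models g d \/ models g (single c).
Proof.
split.
- case=> [[x [y [gx [[dy|->] xy]]]]|[g0|[d1|->]]].
  + by left; left; exists x, y.
  + by right; left; exists x, c; split; [|split; [right|]].
  + by left; right; left.
  + by left; right; right.
  + by right; right; right; right.
- case=> [[[x [y [gx [dy xy]]]]|[g0|d1]]|[[x [y [gx [[[]|->] xy]]]]|[g0|[[]|->]]]].
  + by left; exists x, y; split; [|split; [left|]].
  + by right; left.
  + by right; right; left.
  + by left; exists x, c; split; [|split; [right|]].
  + by right; left.
  + by right; right; right.
Qed.

Hypothesis Hord : order_with_bounds le v0 v1.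

Lemma models_single x y : models (single x) (single y) <-> le x y.
Proof.
split=> [|xy]; last by left; exists x, y; split; [right|split; [right|]].
case=> [[_ [_ [[[]|->] [[[]|->] //]]]]|[[[]|<-]|[[]|<-]]].
- by apply: (owb_ge0 Hord).
- by apply: (owb_le1 Hord).
Qed.

Lemma models_single_antitone x x' d :
  le x x' -> models (single x') d -> models (single x) d.
Proof.
move=> xx'; case=> [[_ [y [[[]|->] [dy x'y]]]]|[[[]|x'0]|d1]].
- by left; exists x, y; split; [right | split; last exact: (owb_trans Hord xx' x'y)].
- by right; left; right; symmetry; apply: (owb_le0 Hord); rewrite x'0.
- by right; right.
Qed.

Lemma models_single_monotone g y y' :
  le y y' -> models g (single y) -> models g (single y').
Proof.
move=> yy'; case=> [[x [_ [gx [[[]|->] xy]]]]|[g0|[[]|y1]]].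
- by left; exists x, y'; split; [| split; [right | exact: (owb_trans Hord xy yy')]].
- by right; left.
- by right; right; right; apply: (owb_anti Hord); [rewrite y1 | apply: (owb_le1 Hord)].
Qed.

Definition is_min (m a b : V) : Prop := [/\ m = a \/ m = b, le m a & le m b].

Lemma models_min_rules g d m a b : is_min m a b ->
  (models (addf g m) d <-> models (addf (addf g a) b) d) /\
  (models g (addf d m) <-> models g (addf d a) /\ models g (addf d b)).
Proof.
case=> mab ma mb.
rewrite (models_addl (addf g a)) !(models_addl g) !(models_addr g d).
have [La Lb] : (models (single a) d -> models (single m) d) /\
               (models (single b) d -> models (single m) d).
  by split; apply: models_single_antitone.
have [Ra Rb] : (models g (single m) -> models g (single a)) /\
               (models g (single m) -> models g (single b)).
  by split; apply: models_single_monotone.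
split; split.
- by case=> [P|Mm]; [left; left | case: mab Mm => <-; auto].
- by case=> [[P|/La]|/Lb]; auto.
- by case=> [P|/[dup] /Ra ? /Rb]; auto.
- by case=> [[P|Ma] [P'|Mb]]; auto; case: mab => ->; right.
Qed.

End Models.

Lemma models_flip (V : Type) (le : V -> V -> Prop) v0 v1 g d :
  models_le le v0 v1 g d <-> models_le (fun x y => le y x) v1 v0 d g.
Proof.
split=> [[[x [y [gx [dy xy]]]]|[g0|d1]]|[[y [x [dy [gx xy]]]]|[d1|g0]]].
- by left; exists y, x.
- by right; right.
- by right; left.
- by left; exists x, y.
- by right; right.
- by right; left.
Qed.

Section Sequents.
Variables (V : Type) (le : V -> V -> Prop) (v0 v1 : V) (S : semantics V).
Local Notation sequent := (@sequent V le v0 v1 S).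

Lemma vimg_empty v : vimg v (@empty (sform S)) = empty.
Proof.
apply: functional_extensionality => x; apply: propositional_extensionality.
by split=> [[A []]|[]].
Qed.

Lemma vimg_addf v (G : sform S -> Prop) (A : sform S) :
  vimg v (addf G A) = addf (vimg v G) (seval v A).
Proof.
apply: functional_extensionality => x; apply: propositional_extensionality.
split=> [[B [[GB|->] <-]]|[[B [GB <-]]|->]].
- by left; exists B.
- by right.
- by exists B; split; first left.
- by exists A; split; first right.
Qed.

Hypothesis Hord : order_with_bounds le v0 v1.

Lemma sequent_refl G D A : G A -> D A -> sequent G D.
Proof.
move=> GA DA v _; left; exists (seval v A), (seval v A).
by split; [exists A | split; [exists A | apply: (owb_refl Hord)]].
Qed.

Lemma sequent_min_rules G D A B C :
  (forall v, vals S v -> is_min le (seval v C) (seval v A) (seval v B)) ->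
  (sequent (addf G C) D <-> sequent (addf (addf G A) B) D) /\
  (sequent G (addf D C) <-> sequent G (addf D A) /\ sequent G (addf D B)).
Proof.
move=> Cmin.
have rules v (Hv : vals S v) := models_min_rules Hord (vimg v G) (vimg v D) (Cmin v Hv).
split; split.
- move=> GC v Hv; move: (GC v Hv); rewrite !vimg_addf.
  by case: (rules v Hv) => [[]].
- move=> GAB v Hv; move: (GAB v Hv); rewrite !vimg_addf.
  by case: (rules v Hv) => [[]].
- move=> DC; split=> v Hv; move: (DC v Hv); rewrite !vimg_addf;
    by case: (rules v Hv) => _ [R _] /R [].
- case=> DA DB v Hv; move: (DA v Hv) (DB v Hv); rewrite !vimg_addf.
  by case: (rules v Hv) => _ [_ R] ? ?; apply: R.
Qed.

End Sequents.

Lemma sequent_flip (V : Type) (le : V -> V -> Prop) v0 v1 (S : semantics V) G D :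
  sequent le v0 v1 G D <-> @sequent V (fun x y => le y x) v1 v0 S D G.
Proof. by split=> GD v Hv; apply/models_flip; apply: GD. Qed.

Lemma sequent_max_rules (V : Type) (le : V -> V -> Prop) v0 v1 (S : semantics V)
    (Hord : order_with_bounds le v0 v1) G D (A B C : sform S) :
  (forall v, vals S v ->
     is_min (fun x y => le y x) (seval v C) (seval v A) (seval v B)) ->
  (sequent le v0 v1 G (addf D C) <-> sequent le v0 v1 G (addf (addf D A) B)) /\
  (sequent le v0 v1 (addf G C) D <->
     sequent le v0 v1 (addf G A) D /\ sequent le v0 v1 (addf G B) D).
Proof.
move=> Cmax; rewrite !(sequent_flip le).
exact: (sequent_min_rules (owb_flip Hord) D G Cmax).
Qed.

Definition min_by (V : Type) (le : V -> V -> Prop) (a b : V) : V :=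
  if excluded_middle_informative (le a b) then a else b.

Lemma is_min_min_by (V : Type) (le : V -> V -> Prop) a b :
  (forall x, le x x) -> le a b \/ le b a -> is_min le (min_by le a b) a b.
Proof.
rewrite /min_by => refl ab; case: excluded_middle_informative => [|not_ab].
- by split; [left | |].
- by split; [right | case: ab | ].
Qed.

Lemma middle_value (V : finType) (v0 v1 : V) : 3 <= #|V| -> exists2 m, m <> v0 & m <> v1.
Proof.
move=> HN.
case: (pickP (fun m => (m != v0) && (m != v1))) => [m /andP[/eqP ? /eqP ?]|none].
  by exists m.
suff : #|V| <= 2 by rewrite leqNgt (leq_trans _ HN).
apply: leq_trans (card_size [:: v0; v1]); apply/subset_leq_card/subsetP => z _.
by move: (none z); rewrite !inE; case: eqP; case: eqP.
Qed.

Lemma realize_atoms01 (V : Type) (S : semantics V) : realizes_finite S ->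
  forall a b, exists v, [/\ vals S v, v 0 = a & v 1 = b].
Proof.
move=> Hfin a b.
case: (Hfin (fun n => if n == 0 then a else b) [:: 0; 1]) => v [Hv vab].
by exists v; split; [| apply: (vab 0) | apply: (vab 1)].
Qed.

Section Connectives.
Variables (V : finType) (le : V -> V -> Prop) (v0 v1 : V) (S : semantics V).
Hypothesis Hord : order_with_bounds le v0 v1.
Hypothesis Hfin : realizes_finite S.
Local Notation sequent := (sequent le v0 v1).

Lemma no_Gneg : 3 <= #|V| -> ~ admits_Gneg le v0 v1 S.
Proof.
move=> HN [f Hf]; have [m m0 m1] := middle_value v0 v1 HN.
pose p : sform (extend S f) := Atom _ 0.
have neg_left : sequent (addf (addf empty p) (new1 p)) empty.
  by apply/(proj1 (Hf _ _ _)); apply: (sequent_refl Hord (A := p)); right.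
have neg_right : sequent empty (addf (addf empty p) (new1 p)).
  by apply/(proj2 (Hf _ _ _)); apply: (sequent_refl Hord (A := p)); right.
have [v [Hv vp _]] := realize_atoms01 Hfin m m.
move: (neg_left v Hv) (neg_right v Hv).
rewrite !vimg_addf vimg_empty models_emptyl models_emptyr.
have -> : seval v p = m := vp.
case=> [[[]|/esym/m0 []]|d0] [[[]|/esym/m1 []]|d1].
by apply: m0; apply: (owb_collapse Hord); rewrite d0 d1.
Qed.

Lemma no_Gcond : 3 <= #|V| -> ~ admits_Gcond le v0 v1 S.
Proof.
move=> HN [f Hf]; have [m m0 m1] := middle_value v0 v1 HN.
pose p : sform (extend S f) := Atom _ 0.
pose q : sform (extend S f) := Atom _ 1.
have modus_ponens : sequent (addf (addf empty (new2 p q)) p) (addf empty q).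
  by apply/(proj1 (Hf _ _ _ _)); apply: (sequent_refl Hord (A := new2 p q)); right.
have excluded_middle : sequent empty (addf (addf empty p) (new2 p q)).
  apply/(proj1 (Hf _ _ _ _)).
  by apply: (sequent_refl Hord (A := p)); [right | left; right].
have [v [Hv vp vq]] := realize_atoms01 Hfin m v0.
move: (modus_ponens v Hv) (excluded_middle v Hv).
rewrite !vimg_addf vimg_empty models_addl !(models_single Hord) models_emptyl.
have -> : seval v p = m := vp.
have -> : seval v q = v0 := vq.
case=> [/(owb_le0 Hord) d0|/(owb_le0 Hord)/m0 []] [[[]|/esym/m1 []]|d1].
by apply: m0; apply: (owb_collapse Hord); rewrite -d0 d1.
Qed.

Lemma Gdisj_comparable : admits_Gdisj le v0 v1 S -> forall a b, le a b \/ le b a.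
Proof.
move=> [f Hf] a b.
pose p : sform (extend S f) := Atom _ 0.
pose q : sform (extend S f) := Atom _ 1.
have disj_right : sequent (addf empty (new2 p q)) (addf (addf empty p) q).
  by apply/(proj1 (Hf _ _ _ _)); apply: (sequent_refl Hord (A := new2 p q)); right.
have [disj_p disj_q] : sequent (addf empty p) (addf empty (new2 p q)) /\
                       sequent (addf empty q) (addf empty (new2 p q)).
  by apply/(proj2 (Hf _ _ _ _)); apply: (sequent_refl Hord (A := new2 p q)); right.
have [v [Hv vp vq]] := realize_atoms01 Hfin a b.
move: (disj_right v Hv) (disj_p v Hv) (disj_q v Hv).
rewrite !vimg_addf vimg_empty models_addr !(models_single Hord).
have -> : seval v p = a := vp.
have -> : seval v q = b := vq.
case=> [da|db] ad bd.
- by right; apply: (owb_trans Hord) bd da.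
- by left; apply: (owb_trans Hord) ad db.
Qed.

Lemma total_comparable : total_le le v0 v1 -> forall a b, le a b \/ le b a.
Proof.
move=> total a b.
have [->|a0] := eqVneq a v0; first by left; apply: (owb_ge0 Hord).
have [->|a1] := eqVneq a v1; first by right; apply: (owb_le1 Hord).
have [->|b0] := eqVneq b v0; first by right; apply: (owb_ge0 Hord).
have [->|b1] := eqVneq b v1; first by left; apply: (owb_le1 Hord).
by apply: total; apply/eqP.
Qed.

Lemma comparable_Gconj : (forall a b, le a b \/ le b a) -> admits_Gconj le v0 v1 S.
Proof.
move=> cmp; exists (fun x => min_by le (x ord0) (x ord_max)) => G D A B.
apply: (sequent_min_rules Hord) => v _.
exact: is_min_min_by (owb_refl Hord) (cmp _ _).
Qed.

Lemma comparable_Gdisj : (forall a b, le a b \/ le b a) -> admits_Gdisj le v0 v1 S.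
Proof.
move=> cmp; exists (fun x => min_by (fun a b => le b a) (x ord0) (x ord_max)) => G D A B.
apply: (sequent_max_rules Hord) => v _.
exact: is_min_min_by (owb_refl Hord) (cmp _ _).
Qed.

End Connectives.

Theorem theorem6p7 (V : finType) (le : V -> V -> Prop) (v0 v1 : V)
  (Hord : order_with_bounds le v0 v1) (HN : 3 <= #|V|)
  (S : semantics V) (Hfin : realizes_finite S) (Hexp : atomic_expressive S) :
  ~ admits_Gneg le v0 v1 S /\ ~ admits_Gcond le v0 v1 S /\
  (admits_Gconj le v0 v1 S /\ admits_Gdisj le v0 v1 S <-> total_le le v0 v1).
Proof.
split; first exact: no_Gneg.
split; first exact: no_Gcond.
split=> [[_ /(Gdisj_comparable Hord Hfin) cmp] | /(total_comparable Hord) cmp].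
- by move=> a b *; apply: cmp.
- by split; [apply: comparable_Gconj | apply: comparable_Gdisj].
Qed.
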